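(* Let $k\geq 2$ and let $G$ be a bipartite graph of order $n\geq 11k-4$ that does not contain $k\cdot P_3$ as a subgraph. Then $e(G)\leq (k-1)(n-k+1)$. Moreover, if $k=2$, equality holds if and only if $G=T_{n,s}$ for some $s\in\{0,1,\dots,\lfloor (n-1)/2\rfloor\}$; if $k\geq 3$, equality holds if and only if $G=K_{k-1,n-k+1}$.
   Context: Graphs are finite and simple; $e(G)$ is the number of edges. $P_3$ is the path on 3 vertices and $k\cdot P_3$ is the disjoint union of $k$ copies of $P_3$. $K_{a,b}$ is the complete bipartite graph with parts of sizes $a$ and $b$. For $0\leq s\leq \lfloor (n-1)/2\rfloor$, $T_{n,s}$ is the tree of order $n$ obtained by taking $s$ paths $P_3$ and $n-2s-1$ paths $P_2$ and identifying an end vertex of each of these paths into a single common vertex (so $T_{n,0}$ is the star of order $n$). *)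

From mathcomp Require Import all_boot.
Set Implicit Arguments. Unset Strict Implicit. Unset Printing Implicit Defensive.

Definition simple_graph (T : finType) (e : rel T) : Prop :=
  symmetric e /\ irreflexive e.

Definition edge_set (T : finType) (e : rel T) : {set {set T}} :=
  [set A : {set T} | [exists x, exists y, (A == [set x; y]) && e x y]].

Definition num_edges (T : finType) (e : rel T) : nat := #|edge_set e|.

Definition bipartite (T : finType) (e : rel T) : Prop :=
  exists A : {set T}, forall x y, e x y -> (x \in A) != (y \in A).

(* G contains k.P3 as a subgraph: an injective map of the vertices of k
   disjoint copies of P3 (vertex (i,j) is the j-th vertex of the i-th path,
   path edges (i,0)-(i,1) and (i,1)-(i,2)) sending edges to edges. *)
Definition contains_kP3 (T : finType) (e : rel T) (k : nat) : Prop :=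
  exists f : 'I_k * 'I_3 -> T,
    injective f /\
    forall i : 'I_k,
      e (f (i, inord 0)) (f (i, inord 1)) /\ e (f (i, inord 1)) (f (i, inord 2)).

Definition graph_iso (T T' : finType) (e : rel T) (e' : rel T') : Prop :=
  exists f : T -> T', bijective f /\ forall x y, e x y = e' (f x) (f y).

Definition Kab_rel (a b : nat) : rel 'I_(a + b) :=
  fun x y => (x < a) != (y < a).

(* T_{n,s} on vertex set 'I_n: vertex 0 is the common vertex;
   vertices 1..s are the middle vertices of the s paths P3, vertex i+s
   (1 <= i <= s) is the far end of the path through i; vertices
   2s+1..n-1 are the far ends of the n-2s-1 paths P2. *)
Definition tns_adj (s x y : nat) : bool :=
  ((x == 0) && (0 < y <= s))
  || ((x == 0) && (2 * s < y))
  || ((0 < x <= s) && (y == x + s)).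

Definition Tns_rel (n s : nat) : rel 'I_n :=
  fun x y => tns_adj s x y || tns_adj s y x.
Arguments Tns_rel : clear implicits.
Arguments Kab_rel : clear implicits.

From mathcomp Require Import all_boot zify.
Set Implicit Arguments. Unset Strict Implicit. Unset Printing Implicit Defensive.

(* Count ordered pairs of adjacent vertices, so that [edge_pairs V V] is twice the
   number of edges of G[V], and induct on k.  If every degree in V is at most
   2k - 1, take a maximal family of disjoint paths P3 (fewer than k of them):
   outside it G is a matching, so e(G) <= 3(k-1)(2k-1) + n/2, which is below
   (k-1)(n-k+1) as soon as n >= 11k - 4.  Otherwise some vertex v has degree at
   least 2k; as G has no triangle, v sees at most two vertices of each path of a
   P3-packing of G - v, so G - v contains no (k-1)P3.  For k = 2 the graph G - v
   is a matching, whence e(G) <= n - 1, with equality only if every vertex other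
   than v and its neighbours has exactly one neighbour, lying in N(v): this is
   T_{n,s}.  For k >= 3, either deg v <= n - k + 1 and induction on G - v
   concludes, or the class of v in the bipartition has a <= k - 1 vertices and
   e(G) <= a(n - a) <= (k-1)(n-k+1), with equality only if a = k - 1 and all
   pairs across the bipartition are edges, i.e. G = K_{k-1,n-k+1}. *)

(** * Degrees and ordered edge counts *)

Section Degrees.
Variables (T : finType) (e : rel T).
Implicit Types (V S X Y : {set T}) (v x y : T).

Definition deg (V : {set T}) (x : T) : nat := \sum_(y in V) e x y.

Definition edge_pairs (X Y : {set T}) : nat := \sum_(x in X) deg Y x.

Lemma deg_card V x : deg V x = #|[set y in V | e x y]|.
Proof.
rewrite -sum1_card [RHS](eq_bigl (fun y => (y \in V) && e x y)) => [|y]; last by rewrite inE.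
by rewrite big_mkcondr; apply: eq_bigr => y _; case: (e x y).
Qed.

Lemma deg_gt1P V x :
  reflect (exists y1 y2, [/\ y1 \in V, y2 \in V, y1 != y2, e x y1 & e x y2]) (1 < deg V x).
Proof.
rewrite deg_card; apply: (iffP card_gt1P) => [[y1 [y2 []]]|[y1 [y2 [? ? ? ? ?]]]].
  by rewrite !inE => /andP [? ?] /andP [? ?] ?; exists y1, y2.
by exists y1, y2; rewrite !inE; split => //; apply/andP.
Qed.

Lemma deg_setID V S x : deg V x = deg (V :&: S) x + deg (V :\: S) x.
Proof. exact: big_setID. Qed.

Lemma deg_subset S V x : S \subset V -> deg S x <= deg V x.
Proof. by move=> SV; rewrite (deg_setID V S) (setIidPr SV) leq_addr. Qed.

Lemma edge_pairs_setIDl V S Y :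
  edge_pairs V Y = edge_pairs (V :&: S) Y + edge_pairs (V :\: S) Y.
Proof. exact: big_setID. Qed.

Lemma edge_pairs_setIDr X V S :
  edge_pairs X V = edge_pairs X (V :&: S) + edge_pairs X (V :\: S).
Proof. by rewrite -big_split; apply: eq_bigr => x _; apply: deg_setID. Qed.

Lemma edge_pairs_max_deg X Y d : {in X, forall x, deg Y x <= d} -> edge_pairs X Y <= #|X| * d.
Proof. by move=> le_d; rewrite -sum_nat_const; apply: leq_sum. Qed.

Lemma max_deg_cases V d :
  {in V, forall x, deg V x <= d} \/ exists2 v, v \in V & d < deg V v.
Proof.
have [/exists_inP [v vV high]|/exists_inPn low] := boolP [exists v in V, d < deg V v].
  by right; exists v.
by left=> x /low; rewrite -leqNgt.
Qed.

Lemma card_setD1 V v : v \in V -> #|V :\ v| = #|V| - 1.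
Proof. by move=> vV; rewrite [in RHS](cardsD1 v V) vV add1n subn1. Qed.

Lemma edge_pairsT : edge_pairs setT setT = \sum_x \sum_y (e x y : nat).
Proof. by apply: eq_big => [x|x _]; rewrite ?in_setT //; apply: eq_bigl => y; rewrite in_setT. Qed.

Hypothesis e_sym : symmetric e.

Lemma edge_pairsC X Y : edge_pairs X Y = edge_pairs Y X.
Proof.
rewrite /edge_pairs /deg exchange_big; apply: eq_bigr => y _.
by apply: eq_bigr => x _; rewrite e_sym.
Qed.

Hypothesis e_irr : irreflexive e.

Lemma edge_pairsD1 V v :
  v \in V -> edge_pairs V V = edge_pairs (V :\ v) (V :\ v) + 2 * deg V v.
Proof.
move=> vV; have Vv : V :&: [set v] = [set v] by apply/setIidPr; rewrite sub1set.
have degD1 x : deg V x = deg (V :\ v) x + e x v.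
  by rewrite (deg_setID V [set v]) Vv /deg big_set1 addnC.
rewrite /edge_pairs (big_setID [set v]) /= Vv big_set1 (eq_bigr _ (fun x _ => degD1 x)).
rewrite big_split /= -/(deg (V :\ v) v) -/(edge_pairs (V :\ v) (V :\ v)).
rewrite (degD1 v) e_irr addn0.
have -> : \sum_(x in V :\ v) (e x v : nat) = deg (V :\ v) v by apply: eq_bigr => x _; rewrite e_sym.
lia.
Qed.

End Degrees.

Lemma eq_edge_pairs (T : finType) (e e' : rel T) (X Y : {set T}) :
  e =2 e' -> edge_pairs e X Y = edge_pairs e' X Y.
Proof. by move=> ee'; apply: eq_bigr => x _; apply: eq_bigr => y _; rewrite ee'. Qed.

(** * Packings of paths P3 *)

Section Packings.
Variables (T : finType) (e : rel T).
Implicit Types (V R : {set T}) (x : T) (s : seq (T * T * T)).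

Definition P3_verts (p : T * T * T) : seq T := [:: p.1.1; p.1.2; p.2].

Definition is_P3 (p : T * T * T) : bool := e p.1.1 p.1.2 && e p.1.2 p.2.

Definition pack_verts (s : seq (T * T * T)) : seq T := flatten (map P3_verts s).

Definition P3_packing (V : {set T}) (s : seq (T * T * T)) : bool :=
  [&& uniq (pack_verts s), all [in V] (pack_verts s) & all is_P3 s].

Definition has_P3_packing (V : {set T}) (t : nat) : Prop :=
  exists2 s, P3_packing V s & size s = t.

Definition unpacked (V : {set T}) (s : seq (T * T * T)) : {set T} :=
  V :\: [set x in pack_verts s].

Definition induces_matching (R : {set T}) : Prop := {in R, forall x, deg e R x <= 1}.

Lemma size_pack_verts s : size (pack_verts s) = 3 * size s.
Proof. by elim: s => //= p s IH; rewrite IH mulnS. Qed.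

Lemma pack_verts_cons p s : pack_verts (p :: s) = P3_verts p ++ pack_verts s.
Proof. by []. Qed.

Lemma nth_pack_verts x0 s i j : j < 3 ->
  nth x0 (pack_verts s) (3 * i + j) = nth x0 (P3_verts (nth (x0, x0, x0) s i)) j.
Proof.
move=> j3; elim: s i => [|p s IH] [|i]; rewrite ?pack_verts_cons.
- by case: j j3 => [|[|[]]].
- by case: j j3 => [|[|[]]].
- by rewrite muln0 nth_cat j3.
- by rewrite nth_cat mulnS -addnA ltnNge leq_addr /= addKn IH.
Qed.

Lemma P3_packing_contains s : P3_packing setT s -> contains_kP3 e (size s).
Proof.
case/and3P=> uniq_s _ /allP P3_s; case: s uniq_s P3_s => [|p0 s] uniq_s P3_s.
  have f0 : 'I_0 * 'I_3 -> T by case=> [[]].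
  by exists f0; split=> [[[]]|[]].
(* [T] may be empty, so the default vertex is taken from the packing. *)
have x0 := p0.1.1; move: (p0 :: s) uniq_s P3_s => {p0}s uniq_s P3_s.
exists (fun q : 'I_(size s) * 'I_3 => nth x0 (pack_verts s) (3 * q.1 + q.2)); split.
  move=> [i j] [i' j'] /= /eqP; rewrite nth_uniq ?size_pack_verts //; last 2 first.
  - by have := ltn_ord i; have := ltn_ord j; lia.
  - by have := ltn_ord i'; have := ltn_ord j'; lia.
  have := ltn_ord j; have := ltn_ord j' => ? ? /eqP ?.
  by congr pair; apply: ord_inj; lia.
move=> i; rewrite !nth_pack_verts ?inordK //.
by case/andP: (P3_s _ (mem_nth (x0, x0, x0) (ltn_ord i))).
Qed.

Lemma unpackedE V s x : (x \in unpacked V s) = (x \in V) && (x \notin pack_verts s).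
Proof. by rewrite !inE andbC. Qed.

Lemma packed_subset V s : P3_packing V s -> [set x in pack_verts s] \subset V.
Proof. by case/and3P=> _ /allP sub _; apply/subsetP => x; rewrite inE => /sub. Qed.

Lemma card_packed V s : P3_packing V s -> #|[set x in pack_verts s]| = 3 * size s.
Proof. by case/and3P=> /card_uniqP uniq_s _ _; rewrite cardsE uniq_s size_pack_verts. Qed.

Lemma P3_packing_subset V V' s : V \subset V' -> P3_packing V s -> P3_packing V' s.
Proof.
move=> /subsetP VV' /and3P [uniq_s /allP sub P3_s].
by apply/and3P; split=> //; apply/allP => x /sub /VV'.
Qed.

Lemma induces_matching_nbr R x y1 y2 : induces_matching R ->
  x \in R -> y1 \in R -> y2 \in R -> e x y1 -> e x y2 -> y1 = y2.
Proof.
move=> match_R xR y1R y2R exy1 exy2; apply/eqP; apply: contraTT (match_R x xR) => y12.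
by rewrite -ltnNge; apply/deg_gt1P; exists y1, y2.
Qed.

Hypothesis e_sym : symmetric e.
Hypothesis e_irr : irreflexive e.

Lemma P3_packing_cons V s a b c :
  P3_packing V s -> a \in unpacked V s -> b \in unpacked V s -> c \in unpacked V s ->
  a != c -> e a b -> e b c -> P3_packing V ((a, b, c) :: s).
Proof.
move=> /and3P [uniq_s sub P3_s]; rewrite !unpackedE.
move=> /andP [aV a_s] /andP [bV b_s] /andP [cV c_s] ac eab ebc.
have ab : a != b by apply: contraTneq eab => ->; rewrite e_irr.
have bc : b != c by apply: contraTneq ebc => ->; rewrite e_irr.
rewrite /P3_packing pack_verts_cons cat_uniq all_cat /= !inE negb_or.
rewrite has_sym /= !(negbTE a_s, negbTE b_s, negbTE c_s).
by rewrite ab ac bc aV bV cV uniq_s sub P3_s /is_P3 /= eab ebc.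
Qed.

Lemma P3_packing_extend V s : P3_packing V s ->
  has_P3_packing V (size s).+1 \/ induces_matching (unpacked V s).
Proof.
move=> pack_s; set R := unpacked V s.
have [/exists_inP [x xR /deg_gt1P [y1 [y2 [y1R y2R y12 exy1 exy2]]]]|/exists_inPn low] :=
  boolP [exists x in R, 1 < deg e R x].
  left; exists ((y1, x, y2) :: s) => //.
  by apply: P3_packing_cons; rewrite // e_sym.
by right=> x xR; rewrite leqNgt low.
Qed.

Lemma P3_free_matching V : ~ has_P3_packing V 1 -> induces_matching V.
Proof.
move=> no_P3; have -> : V = unpacked V [::] by apply/setP => x; rewrite unpackedE andbT.
by case: (P3_packing_extend (isT : P3_packing V [::])).
Qed.

Lemma maximal_P3_packing V k : ~ has_P3_packing V k ->
  exists2 s, P3_packing V s & size s < k /\ induces_matching (unpacked V s).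
Proof.
move=> no_k; suff : has_P3_packing V k \/
    exists2 s, P3_packing V s & size s < k /\ induces_matching (unpacked V s).
  by case=> // /no_k.
elim: k {no_k} => [|t [[s pack_s <-]|[s pack_s [st match_s]]]]; first by left; exists [::].
  by case: (P3_packing_extend pack_s) => [|match_s]; [left | right; exists s].
by right; exists s => //; split=> //; apply: ltnW.
Qed.

End Packings.

(** * Low and high degrees *)

Section LowDegree.
Variables (T : finType) (e : rel T).
Hypotheses (e_sym : symmetric e) (e_irr : irreflexive e).
Implicit Types (V S : {set T}).

Lemma edge_pairs_matching_complement V S : S \subset V -> induces_matching e (V :\: S) ->
  edge_pairs e V V <= 2 * edge_pairs e S V + #|V :\: S|.
Proof.
move=> SV match_R; set R := V :\: S.
have RR : edge_pairs e R R <= #|R| by rewrite -[#|R|]muln1; apply: edge_pairs_max_deg.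
have RS : edge_pairs e R S <= edge_pairs e S V.
  by rewrite edge_pairsC //; apply: leq_sum => x _; apply: deg_subset; apply: subsetDl.
rewrite (edge_pairs_setIDl _ V S) (edge_pairs_setIDr _ R V S) !(setIidPr SV) -/R.
lia.
Qed.

Lemma edge_pairs_low_deg V k : 2 <= k -> 11 * k - 4 <= #|V| -> ~ has_P3_packing e V k ->
  {in V, forall x, deg e V x <= 2 * k - 1} -> edge_pairs e V V < 2 * (k - 1) * (#|V| - k + 1).
Proof.
move=> k2 large no_k low.
have [s pack_s [sk match_s]] := maximal_P3_packing e_sym e_irr no_k.
have SV := packed_subset pack_s; set S := [set x in pack_verts s] in SV.
have cS : #|S| = 3 * size s := card_packed pack_s.
have cR : #|V :\: S| = #|V| - 3 * size s by rewrite cardsD (setIidPr SV) cS.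
have := edge_pairs_matching_complement SV match_s; rewrite cR.
have : edge_pairs e S V <= #|S| * (2 * k - 1).
  by apply: edge_pairs_max_deg => x /(subsetP SV); apply: low.
rewrite cS; nia.
Qed.

End LowDegree.

Section TriangleFree.
Variables (T : finType) (e : rel T).
Hypotheses (e_sym : symmetric e) (e_irr : irreflexive e).
Hypothesis e_tri : forall x y z, e x y -> e y z -> ~~ e x z.
Implicit Types (V : {set T}) (v : T) (s : seq (T * T * T)).

Lemma count_adj_P3 v p : is_P3 e p -> count (e v) (P3_verts p) <= 2.
Proof.
case: p => [[a b] c] /andP [/= eab _].
have : ~~ (e v a && e v b) by apply/andP => [[eva evb]]; have := e_tri eva eab; rewrite evb.
by rewrite /= addn0; case: (e v a); case: (e v b); case: (e v c).
Qed.

Lemma count_adj_packing v s : all (is_P3 e) s -> count (e v) (pack_verts s) <= 2 * size s.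
Proof.
elim: s => [|p s IH] // /andP [P3_p P3_s].
by rewrite pack_verts_cons count_cat mulnS leq_add ?count_adj_P3 ?IH.
Qed.

Lemma high_deg_P3_packing V v k : v \in V -> 2 * k.+1 <= deg e V v ->
  has_P3_packing e (V :\ v) k -> has_P3_packing e V k.+1.
Proof.
move=> vV high [s pack_s sk]; have [uniq_s _ P3_s] := and3P pack_s.
set S := [set x in pack_verts s]; set N := [set y in V | e v y].
have NS : #|N :&: S| <= 2 * size s.
  apply: leq_trans (count_adj_packing v P3_s).
  rewrite -size_filter -(card_uniqP (filter_uniq _ uniq_s)).
  by apply: subset_leq_card; apply/subsetP => x; rewrite !inE mem_filter => /andP [/andP [_ ->]].
have /card_gt1P [a [c [aNS cNS ac]]] : 1 < #|N :\: S|.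
  by have := cardsID S N; rewrite deg_card -/N in high; lia.
move: aNS cNS; rewrite !inE => /and3P [a_s aV eva] /and3P [c_s cV evc].
have v_s : v \notin pack_verts s.
  apply/negP => v_s; have := subsetP (packed_subset pack_s) v.
  by rewrite !inE v_s eqxx => /(_ isT).
exists ((a, v, c) :: s); last by rewrite /= sk.
apply: P3_packing_cons; rewrite ?unpackedE ?aV ?vV ?cV // 1?e_sym //.
exact: P3_packing_subset (subsetDl V [set v]) pack_s.
Qed.

End TriangleFree.

Section Star.
Variables (T : finType) (e : rel T).
Hypotheses (e_sym : symmetric e) (e_irr : irreflexive e).
Hypothesis e_tri : forall x y z, e x y -> e y z -> ~~ e x z.
Variables (V : {set T}) (v : T).
Hypotheses (vV : v \in V) (match_Vv : induces_matching e (V :\ v)).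

Let N := [set y in V | e v y].
Let U := (V :\ v) :\: N.

Lemma star_nbhd_subset : N \subset V :\ v.
Proof.
apply/subsetP => y; rewrite !inE => /andP [-> evy]; rewrite andbT.
by apply: contraTneq evy => ->; rewrite e_irr.
Qed.

Lemma deg_star_le1 u : u \in U -> deg e N u <= 1.
Proof.
move=> uU; have uVv : u \in V :\ v by move: uU; rewrite inE => /andP [].
exact: leq_trans (deg_subset _ _ star_nbhd_subset) (match_Vv uVv).
Qed.

Lemma edge_pairs_star : edge_pairs e V V <= 2 * #|N| + #|U| + \sum_(u in U) deg e N u.
Proof.
have NV := star_nbhd_subset.
have NN : edge_pairs e N N = 0.
  apply/eqP; rewrite sum_nat_eq0; apply/forall_inP => x; rewrite inE => /andP [_ evx].
  rewrite sum_nat_eq0; apply/forall_inP => y; rewrite inE => /andP [_ evy].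
  by rewrite eqb0; apply: e_tri evy; rewrite e_sym.
have UVv : edge_pairs e U (V :\ v) <= #|U|.
  rewrite -[#|U|]muln1; apply: edge_pairs_max_deg => u; rewrite inE => /andP [_].
  exact: match_Vv.
rewrite (edge_pairsD1 e_sym e_irr vV) deg_card -/N.
rewrite (edge_pairs_setIDl _ (V :\ v) N) (edge_pairs_setIDr _ _ (V :\ v) N) !(setIidPr NV) -/U.
rewrite NN (edge_pairsC e_sym N U) -/(edge_pairs e U N); lia.
Qed.

Lemma card_star : #|N| + #|U| = #|V| - 1.
Proof.
have := cardsID N (V :\ v); rewrite (setIidPr star_nbhd_subset) -/U => ->.
exact: card_setD1.
Qed.

Lemma sum_deg_star_le : \sum_(u in U) deg e N u <= #|U|.
Proof. by rewrite -[#|U|]muln1 -sum_nat_const; apply: leq_sum deg_star_le1. Qed.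

Lemma edge_pairs_star_le : edge_pairs e V V <= 2 * (#|V| - 1).
Proof. by have := edge_pairs_star; have := card_star; have := sum_deg_star_le; lia. Qed.

Lemma edge_pairs_star_eq : edge_pairs e V V = 2 * (#|V| - 1) ->
  {in U, forall u, exists2 y, y \in N & {in V, forall z, e u z = (z == y)}}.
Proof.
move=> extremal u uU; have sumU : #|U| <= \sum_(u in U) deg e N u.
  by have := edge_pairs_star; have := card_star; lia.
have [_] := @leqif_sum _ [in U] _ (deg e N) (fun=> 1) (fun u uU => leqif_eq (deg_star_le1 uU)).
rewrite sum_nat_const muln1 eqn_leq sum_deg_star_le sumU => /esym /forall_inP /(_ u uU) /eqP.
rewrite deg_card => card1; have /card_gt0P [y0] : 0 < #|[set y in N | e u y]| by rewrite card1.
rewrite inE => /andP [y0N euy0]; exists y0 => // z zV; apply/idP/eqP => [euz|-> //].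
have [uVv evu] : u \in V :\ v /\ ~~ e v u.
  by case/setDP: uU => uVv; rewrite inE (subsetP (subD1set V v) u uVv).
have zVv : z \in V :\ v.
  by rewrite !inE zV andbT; apply: contraTneq euz => ->; rewrite e_sym (negbTE evu).
exact: induces_matching_nbr match_Vv uVv zVv (subsetP star_nbhd_subset y0 y0N) euz euy0.
Qed.

End Star.

(** * Bipartite graphs and the upper bound *)

Section Bipartitions.
Variables (T : finType) (e : rel T).
Implicit Types (V X Y : {set T}) (v x y : T).

Definition bipartition (X : {set T}) : Prop := forall x y, e x y -> (x \in X) != (y \in X).

Definition cross (X : {set T}) : rel T := fun x y => (x \in X) != (y \in X).

Lemma bipartitionC X : bipartition X -> bipartition (~: X).
Proof. by move=> bipX x y /bipX; rewrite !inE; case: (x \in X); case: (y \in X). Qed.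

Lemma bipartite_triangle_free : bipartite e -> forall x y z, e x y -> e y z -> ~~ e x z.
Proof.
case=> A bipA x y z /bipA exy /bipA eyz; apply/negP => /bipA; move: exy eyz.
by case: (x \in A); case: (y \in A); case: (z \in A).
Qed.

Lemma edge_pairs_leqif (e' : rel T) X Y : subrel e e' ->
  edge_pairs e X Y <= edge_pairs e' X Y ?= iff [forall x in X, forall y in Y, e x y == e' x y].
Proof.
move=> ee'; apply: leqif_sum => x _; apply: leqif_sum => y _.
by have := @ee' x y; case: (e x y); case: (e' x y) => // /(_ isT).
Qed.

Lemma deg_cross V X x :
  deg (cross X) V x = if x \in X then #|V :\: X| else #|V :&: X|.
Proof.
rewrite (deg_setID _ V X) /deg.
rewrite (eq_bigr (fun=> x \notin X : nat)) => [|y /setIP [_ yX]]; last first.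
  by rewrite /cross yX; case: (x \in X).
rewrite [X in _ + X](eq_bigr (fun=> x \in X : nat)) => [|y /setDP [_ /negbTE yX]]; last first.
  by rewrite /cross yX; case: (x \in X).
by rewrite !sum_nat_const; case: (x \in X); rewrite /= ?muln0 ?muln1 ?addn0.
Qed.

Lemma edge_pairs_cross V X : edge_pairs (cross X) V V = 2 * (#|V :&: X| * #|V :\: X|).
Proof.
rewrite /edge_pairs (big_setID X) /=.
rewrite (eq_bigr (fun=> #|V :\: X|)) => [|x /setIP [_ xX]]; last by rewrite deg_cross xX.
rewrite [X in _ + X](eq_bigr (fun=> #|V :&: X|)) => [|x /setDP [_ /negbTE xX]]; last first.
  by rewrite deg_cross xX.
by rewrite !sum_nat_const; lia.
Qed.

Lemma bipartition_of_vertex : bipartite e -> forall v, exists2 X, bipartition X & v \in X.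
Proof.
case=> A bipA v; case vA: (v \in A); first by exists A.
by exists (~: A); [apply: bipartitionC | rewrite inE vA].
Qed.

Lemma edge_pairs_bipartition V X : bipartition X ->
  edge_pairs e V V <= 2 * (#|V :&: X| * #|V :\: X|).
Proof. by move=> bipX; rewrite -edge_pairs_cross; apply: edge_pairs_leqif. Qed.

Lemma deg_bipartition V X v : bipartition X -> v \in X -> deg e V v <= #|V :\: X|.
Proof.
move=> bipX vX; have := deg_cross V X v; rewrite vX => <-.
by apply: leq_sum => y _; have := @bipX v y; rewrite /cross; case: (e v y) => // /(_ isT) ->.
Qed.

End Bipartitions.

Section EdgeCount.
Variables (T : finType) (e : rel T) (A : {set T}).
Hypotheses (e_sym : symmetric e) (bipA : bipartition e A).

Lemma edge_pairs_side_eq0 X : bipartition e X -> edge_pairs e X X = 0.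
Proof.
move=> bipX; apply/eqP; rewrite sum_nat_eq0; apply/forall_inP => x xX.
rewrite sum_nat_eq0; apply/forall_inP => y yX; rewrite eqb0.
by apply/negP => /bipX; rewrite xX yX.
Qed.

Lemma edge_pairs_bipartite : edge_pairs e setT setT = 2 * edge_pairs e A setT.
Proof.
have AA := edge_pairs_side_eq0 bipA; have CC := edge_pairs_side_eq0 (bipartitionC bipA).
rewrite (edge_pairs_setIDl _ setT A) (edge_pairs_setIDr _ _ setT A) setTI setTD AA.
rewrite (edge_pairs_setIDr _ _ setT A) setTI setTD CC (edge_pairsC e_sym (~: A) A).
by rewrite (edge_pairs_setIDr _ A setT A) setTI setTD AA; lia.
Qed.

Lemma num_edges_bipartite : num_edges e = edge_pairs e A setT.
Proof.
set P := [set p : T * T | (p.1 \in A) && e p.1 p.2]; rewrite /num_edges.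
have -> : edge_set e = [set [set p.1; p.2] | p in P].
  apply/setP => B; rewrite inE; apply/idP/imsetP.
    case/existsP => x /existsP [y /andP [/eqP -> exy]].
    case xA: (x \in A); first by exists (x, y); rewrite // inE xA.
    have yA : y \in A by move: (bipA exy); rewrite xA; case: (y \in A).
    by exists (y, x); [rewrite inE yA e_sym | rewrite /= setUC].
  move=> [[x y]]; rewrite inE /= => /andP [xA exy] ->.
  by apply/existsP; exists x; apply/existsP; exists y; rewrite eqxx.
rewrite card_in_imset.
  rewrite -sum1_card big_mkcond /=.
  rewrite (eq_bigr (fun p : T * T => ((p.1 \in A) && e p.1 p.2 : nat))) => [|p _]; last first.
    by rewrite inE; case: (_ && _).
  rewrite -(pair_big xpredT xpredT (fun x y => ((x \in A) && e x y : nat))) /=.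
  rewrite /edge_pairs [RHS]big_mkcond /=; apply: eq_bigr => x _.
  by case: (x \in A); [apply: eq_bigl => y; rewrite in_setT | rewrite big1].
move=> [x y] [x' y']; rewrite !inE /= => /andP [xA exy] /andP [xA' exy'] exy_eq.
have yA : y \notin A by move: (bipA exy); rewrite xA; case: (y \in A).
have yA' : y' \notin A by move: (bipA exy'); rewrite xA'; case: (y' \in A).
have : x \in [set x'; y'] by rewrite -exy_eq !inE eqxx.
rewrite !inE => /orP [/eqP xx|/eqP xy]; last by move: yA'; rewrite -xy xA.
have : y \in [set x'; y'] by rewrite -exy_eq !inE eqxx orbT.
rewrite !inE => /orP [/eqP yx|/eqP yy]; first by move: yA; rewrite yx xA'.
by rewrite xx yy.
Qed.

Lemma num_edges_double : 2 * num_edges e = edge_pairs e setT setT.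
Proof. by rewrite edge_pairs_bipartite num_edges_bipartite. Qed.

End EdgeCount.

Lemma leqif_mul_subn a c n : a <= c -> c + c <= n -> a * (n - a) <= c * (n - c) ?= iff (a == c).
Proof.
move=> ac cn; split; first nia.
by apply/eqP/eqP => [|-> //]; apply: contra_eq => /eqP neq; nia.
Qed.

Section BipartiteBound.
Variables (T : finType) (e : rel T).
Hypotheses (e_sym : symmetric e) (e_irr : irreflexive e) (e_bip : bipartite e).
Implicit Types (V : {set T}) (v : T).

Let e_tri := bipartite_triangle_free e_bip.

Lemma P3_free_high_deg_vertex V k : 0 < k -> 11 * k + 7 <= #|V| ->
  ~ has_P3_packing e V k.+1 -> 2 * k * (#|V| - k) <= edge_pairs e V V ->
  exists2 v, v \in V & ~ has_P3_packing e (V :\ v) k.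
Proof.
move=> k_gt0 large no_k dense.
have [low|[v vV high]] := max_deg_cases e V (2 * k.+1 - 1).
  have : edge_pairs e V V < 2 * (k.+1 - 1) * (#|V| - k.+1 + 1).
    by apply: edge_pairs_low_deg => //; lia.
  have -> : #|V| - k.+1 + 1 = #|V| - k by lia.
  by rewrite subn1 ltnNge dense.
exists v => // pack; apply: no_k.
by apply: (high_deg_P3_packing e_sym e_irr e_tri vV) pack; lia.
Qed.

Lemma edge_pairs_high_deg_step V v k : v \in V -> k.+1 + k.+1 <= #|V| ->
  edge_pairs e (V :\ v) (V :\ v) <= 2 * k * (#|V :\ v| - k) ->
  edge_pairs e V V <= 2 * k.+1 * (#|V| - k.+1).
Proof.
move=> vV large; rewrite (card_setD1 vV) (_ : #|V| - 1 - k = #|V| - k.+1); last by lia.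
move=> IH; case: (leqP (deg e V v) (#|V| - k.+1)) => [low|high].
  by rewrite (edge_pairsD1 e_sym e_irr vV) mulnS mulnDl; lia.
have [X bipX vX] := bipartition_of_vertex e_bip v.
have := deg_bipartition V bipX vX; have := cardsID X V.
set a := #|V :&: X|; set b := #|V :\: X| => ab deg_b.
have a_le : a <= k.+1 by lia.
have [ab_le _] := leqif_mul_subn a_le large; rewrite (_ : #|V| - a = b) in ab_le; last by lia.
by rewrite -mulnA; apply: leq_trans (edge_pairs_bipartition V bipX) _; rewrite leq_mul2l ab_le.
Qed.

(* [k.+1] paths are forbidden, so [2 * k * (#|V| - k)] is the 2(k-1)(n-k+1) of the
   theorem with k shifted by one. *)
Lemma edge_pairs_P3_free k V : 0 < k -> 11 * k + 7 <= #|V| -> ~ has_P3_packing e V k.+1 ->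
  edge_pairs e V V <= 2 * k * (#|V| - k).
Proof.
elim: k V => [//|k IH] V _ large no_k.
case: (ltnP (edge_pairs e V V) (2 * k.+1 * (#|V| - k.+1))) => [/ltnW //|dense].
have [v vV no_k'] := P3_free_high_deg_vertex (ltn0Sn k) large no_k dense.
case: k => [|k] in IH large no_k no_k' dense *.
  by rewrite muln1; have := edge_pairs_star_le e_sym e_irr e_tri vV; apply; apply: P3_free_matching.
apply: (edge_pairs_high_deg_step vV); first by lia.
by apply: IH => //; rewrite card_setD1 //; lia.
Qed.

End BipartiteBound.

(** * The extremal graphs *)

Lemma graph_iso_nth (T : finType) (e : rel T) m (R : rel 'I_m) (x0 : T) (L : seq T) :
  uniq L -> (forall x, x \in L) -> size L = m ->
  (forall i j : 'I_m, e (nth x0 L i) (nth x0 L j) = R i j) -> graph_iso e R.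
Proof.
move=> uniq_L L_full size_L eR.
have index_lt x : index x L < m by rewrite -size_L index_mem.
pose f x : 'I_m := Ordinal (index_lt x).
have fK : cancel f (fun i => nth x0 L i) by move=> x; rewrite nth_index.
have nthK : cancel (fun i : 'I_m => nth x0 L i) f.
  by move=> i; apply: val_inj; rewrite /= index_uniq ?size_L.
exists f; split; first exact: Bijective fK nthK.
by move=> x y; rewrite -eR !fK.
Qed.

Lemma edge_pairs_iso (T T' : finType) (e : rel T) (e' : rel T') :
  graph_iso e e' -> edge_pairs e setT setT = edge_pairs e' setT setT.
Proof.
case=> f [bij_f ef]; rewrite !edge_pairsT (reindex f) /=; last exact: onW_bij.
apply: eq_bigr => x _; rewrite (reindex f) /=; last exact: onW_bij.
by apply: eq_bigr => y _; rewrite ef.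
Qed.

Lemma cross_iso_Kab (T : finType) (e : rel T) (x0 : T) (X : {set T}) :
  e =2 cross X -> graph_iso e (Kab_rel #|X| #|~: X|).
Proof.
move=> eX.
set L := enum X ++ enum (~: X).
have size_L : size L = #|X| + #|~: X| by rewrite size_cat -!cardE.
have nth_L i : i < #|X| + #|~: X| -> (nth x0 L i \in X) = (i < #|X|).
  rewrite nth_cat -cardE => i_lt; case: ltnP => [iX|Xi]; first by rewrite -mem_enum mem_nth -?cardE.
  have : nth x0 (enum (~: X)) (i - #|X|) \in ~: X by rewrite -mem_enum mem_nth -?cardE //; lia.
  by rewrite inE => /negbTE.
apply: (graph_iso_nth (x0 := x0) (L := L)) => //.
- by rewrite cat_uniq !enum_uniq andbT /=; apply/hasPn => x; rewrite !mem_enum inE => /negbTE ->.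
- by move=> x; rewrite mem_cat !mem_enum inE orbN.
- by move=> i j; rewrite eX /cross /Kab_rel !nth_L.
Qed.

Lemma edge_pairs_Kab a b : edge_pairs (Kab_rel a b) setT setT = 2 * (a * b).
Proof.
set X := [set x : 'I_(a + b) | x < a].
have card_X : #|X| = a.
  rewrite -[a in RHS]card_ord -(card_imset _ (@lshift_inj a b)); apply: eq_card => x.
  rewrite inE; apply/idP/imsetP => [x_lt|[i _ ->]]; last by rewrite /= ltn_ord.
  by exists (Ordinal x_lt) => //; apply: val_inj.
have card_CX : #|~: X| = b by have := cardsC X; rewrite card_ord card_X; lia.
rewrite (@eq_edge_pairs _ _ (cross X)) => [|x y]; last by rewrite /cross !inE.
by rewrite edge_pairs_cross setTI setTD card_X card_CX.
Qed.

Definition tns_parent (s i : nat) : nat := if s < i <= 2 * s then i - s else 0.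

Lemma tns_adjE s x y : tns_adj s x y = (y != 0) && (x == tns_parent s y).
Proof. by rewrite /tns_adj /tns_parent; case: ifP => h; apply/idP/idP; lia. Qed.

Lemma tns_parent_lt s i : 0 < i -> tns_parent s i < i.
Proof. by rewrite /tns_parent; case: ifP => h; lia. Qed.

Lemma Tns_relE n s (x y : 'I_n) : Tns_rel n s x y =
  (y != 0 :> nat) && (x == tns_parent s y :> nat)
  || (x != 0 :> nat) && (y == tns_parent s x :> nat).
Proof. by rewrite /Tns_rel !tns_adjE. Qed.

Lemma sum_ord_eq n c : \sum_(i < n) (i == c :> nat) = (c < n).
Proof.
case: ltnP => [cn|nc]; last by rewrite big1 // => i _; rewrite ltn_eqF // (leq_trans _ nc).
rewrite (bigD1 (Ordinal cn)) //= eqxx big1 // => i ic; apply/eqP; rewrite eqb0.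
by apply: contra ic => /eqP ic; apply/eqP/val_inj.
Qed.

Lemma edge_pairs_Tns n s : 0 < n -> edge_pairs (Tns_rel n s) setT setT = 2 * (n - 1).
Proof.
move=> n_gt0.
have deg_parent (y : 'I_n) : \sum_(x < n) tns_adj s x y = (y != 0 :> nat).
  under eq_bigr do rewrite tns_adjE.
  case: eqP => [_|/eqP y0]; first by rewrite big1.
  have par_lt : tns_parent s y < n.
    by apply: ltn_trans (tns_parent_lt s _) (ltn_ord y); rewrite lt0n.
  by transitivity (nat_of_bool (tns_parent s y < n)); [rewrite -sum_ord_eq | rewrite par_lt].
have nonzero : \sum_(y < n) (y != 0 :> nat) = n - 1.
  have : \sum_(y < n) (y != 0 :> nat) + \sum_(y < n) (y == 0 :> nat) = n.
    rewrite -big_split -[n in RHS]card_ord -sum1_card /=.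
    by apply: eq_bigr => y _; case: (_ == _).
  by rewrite sum_ord_eq n_gt0 /=; lia.
have adj_split x y : (Tns_rel n s x y : nat) = tns_adj s x y + tns_adj s y x.
  rewrite /Tns_rel; have : ~~ (tns_adj s x y && tns_adj s y x).
    by apply/negP => /andP []; rewrite /tns_adj; lia.
  by case: (tns_adj s x y); case: (tns_adj s y x).
rewrite edge_pairsT; under eq_bigr do under eq_bigr do rewrite adj_split.
under eq_bigr do rewrite big_split /=.
rewrite big_split /= [X in X + _]exchange_big /=.
by rewrite !(eq_bigr _ (fun y _ => deg_parent y)) nonzero; lia.
Qed.

Section Spider.
Variables (T : finType) (e : rel T) (v : T) (p : T -> T).
Hypotheses (e_sym : symmetric e) (e_irr : irreflexive e).

Let N := [set y | e v y].
Let U := [set u | (u != v) && ~~ e v u].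

Hypothesis adj_U : {in U, forall u y, e u y = (y == p u)}.
Hypothesis p_N : {in U, forall u, p u \in N}.
Hypothesis p_inj : {in U &, injective p}.
Hypothesis indep_N : {in N &, forall x y, ~~ e x y}.

(* Both [e] and [Tns_rel] are trees given by a parent map: every [x != v] hangs
   below [q x], every [i != 0] below [tns_parent s i]. *)
Let q x := if x \in U then p x else v.

Lemma spider_inU x : x != v -> (x \in U) = (x \notin N).
Proof. by rewrite !inE => ->. Qed.

Lemma spider_N_notin_U x : x \in N -> x \notin U.
Proof. by rewrite !inE => ->; rewrite andbF. Qed.

Lemma spider_N_neq x : x \in N -> x != v.
Proof. by rewrite inE; apply: contraTneq => ->; rewrite e_irr. Qed.

Lemma spider_adj x y : e x y = (y != v) && (x == q y) || (x != v) && (y == q x).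
Proof.
have q_notin_U z : q z \notin U.
  by rewrite /q; case: ifP => [/p_N/spider_N_notin_U //|_]; rewrite inE eqxx.
have v_q z : (v == q z) = (z \notin U).
  by rewrite /q; case: ifP => [/p_N/spider_N_neq|_]; rewrite 1?eq_sym ?eqxx // => /negbTE.
have [->|xv] := eqVneq x v.
  rewrite orbF v_q; have [->|yv] := eqVneq y v; first by rewrite e_irr.
  by rewrite spider_inU // negbK inE.
case: (boolP (x \in U)) => [xU|].
  have q_x : q x = p x by rewrite /q xU.
  rewrite adj_U // q_x (_ : x == q y = false) ?andbF //.
  by apply: contraTF xU => /eqP ->; apply: q_notin_U.
rewrite spider_inU // negbK => xN; rewrite /q (negbTE (spider_N_notin_U xN)) /=.
have [->|yv] := eqVneq y v; first by rewrite orbT e_sym; move: xN; rewrite inE.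
rewrite orbF; case: (boolP (y \in U)) => [yU|]; first by rewrite e_sym adj_U.
rewrite spider_inU // negbK => yN; rewrite /= (negbTE xv).
exact/negbTE/indep_N.
Qed.

Let s := #|U|.
Let W := N :\: p @: U.
(* v, the neighbours of v carrying a pendant vertex, these pendants in the same
   order, then the other neighbours of v: the numbering of T_{n,s} in [Tns_rel]. *)
Let L := v :: [seq p u | u <- enum U] ++ enum U ++ enum W.

Lemma spider_seq_uniq : uniq L.
Proof.
have NU x : x \in N -> x \notin U := @spider_N_notin_U x.
have pU_N x : x \in [seq p u | u <- enum U] -> x \in N.
  by case/mapP => u; rewrite mem_enum => uU ->; apply: p_N.
have WN x : x \in W -> x \in N by case/setDP.
rewrite /L cons_uniq cat_uniq map_inj_in_uniq ?enum_uniq; last first.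
  by move=> x y; rewrite !mem_enum; apply: p_inj.
rewrite cat_uniq !enum_uniq !mem_cat !mem_enum /= andbT.
have v_pU : v \notin [seq p u | u <- enum U] by apply/negP => /pU_N; rewrite inE e_irr.
have vN : v \notin N by rewrite inE e_irr.
rewrite (negbTE v_pU) (negbTE (contra (WN v) vN)) [v \in U]inE eqxx /=; apply/andP; split.
  apply/hasPn => x; rewrite mem_cat !mem_enum => /orP [xU|xW].
    by apply: contraL xU => /pU_N /NU.
  apply/negP => /mapP [u]; rewrite mem_enum => uU xe.
  by move: xW; rewrite /W in_setD xe imset_f.
by apply/hasPn => x; rewrite !mem_enum => /WN /NU.
Qed.

Lemma spider_seq_full x : x \in L.
Proof.
rewrite inE !mem_cat !mem_enum; have [//|xv /=] := eqVneq x v.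
case xU: (x \in U); first by rewrite orbT.
have xN : x \in N by move: xU; rewrite spider_inU // => /negbFE.
case: (boolP (x \in p @: U)) => [/imsetP [u uU ->]|xpU].
  by rewrite map_f ?mem_enum.
by rewrite /W in_setD xpU xN !orbT.
Qed.

Lemma size_spider_seq : size L = #|T|.
Proof. by rewrite -(card_uniqP spider_seq_uniq); apply: eq_card => x; rewrite spider_seq_full. Qed.

Lemma size_spider_seq_parts : size L = (2 * s + #|W|).+1.
Proof. by rewrite /= !size_cat size_map -!cardE; lia. Qed.

Let size_pU : size [seq p u | u <- enum U] = s.
Proof. by rewrite size_map -cardE. Qed.

Let size_U : size (enum U) = s.
Proof. by rewrite -cardE. Qed.

Lemma nth_spider_N i : i < s -> nth v L i.+1 = p (nth v (enum U) i).
Proof. by move=> i_lt; rewrite /= nth_cat size_pU i_lt (nth_map v) ?size_U. Qed.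

Lemma nth_spider_U i : i < s -> nth v L (s + i).+1 = nth v (enum U) i.
Proof.
by move=> i_lt; rewrite /= -{1}size_pU -nth_drop drop_size_cat // nth_cat size_U i_lt.
Qed.

Lemma nth_spider_W i : nth v L (2 * s + i).+1 = nth v (enum W) i.
Proof.
rewrite mul2n -addnn -addnA /= -{1}size_pU -nth_drop drop_size_cat //.
by rewrite -{1}size_U -nth_drop drop_size_cat.
Qed.

Lemma spider_parent_nth i : 0 < i < #|T| -> q (nth v L i) = nth v L (tns_parent s i).
Proof.
case: i => [//|i] /andP [_]; rewrite -size_spider_seq size_spider_seq_parts ltnS => i_lt.
have q_N x : x \in N -> q x = v by move=> /spider_N_notin_U /negbTE xU; rewrite /q xU.
have enum_U j : j < s -> nth v (enum U) j \in U by move=> j_lt; rewrite -mem_enum mem_nth ?size_U.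
rewrite /tns_parent; case: (ltnP i s) => [i_s|s_i].
  rewrite ifN; last by lia.
  by rewrite nth_spider_N // q_N // p_N // enum_U.
case: (ltnP i (2 * s)) => [i_2s|s2_i].
  have j_lt : i - s < s by lia.
  rewrite -(subnKC s_i) nth_spider_U // ifT; last by lia.
  by rewrite /q enum_U // -addnS addKn nth_spider_N.
have w_W : nth v (enum W) (i - 2 * s) \in W by rewrite -mem_enum mem_nth -?cardE //; lia.
by rewrite andbF -(subnKC s2_i) nth_spider_W; case/setDP: w_W => /q_N.
Qed.

Lemma spider_iso_Tns : graph_iso e (Tns_rel #|T| s).
Proof.
have nth_eq k l : k < #|T| -> l < #|T| -> (nth v L k == nth v L l) = (k == l).
  by move=> k_lt l_lt; rewrite nth_uniq ?size_spider_seq // spider_seq_uniq.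
have half k l : k < #|T| -> l < #|T| ->
    (nth v L k != v) && (nth v L l == q (nth v L k)) = (k != 0) && (l == tns_parent s k).
  move=> k_lt l_lt; rewrite -[v in _ != v]/(nth v L 0) nth_eq //; last by lia.
  case: eqP => [//|/eqP k0]; rewrite spider_parent_nth ?nth_eq //; last by lia.
  by apply: ltn_trans (tns_parent_lt _ _) k_lt; rewrite lt0n.
apply: (graph_iso_nth (x0 := v) spider_seq_uniq spider_seq_full size_spider_seq) => i j.
by rewrite spider_adj Tns_relE !half.
Qed.

Lemma spider_size_le : s <= (#|T| - 1) %/ 2.
Proof. by have := size_spider_seq_parts; rewrite size_spider_seq; lia. Qed.

End Spider.

Section Extremal.
Variables (T : finType) (e : rel T).
Hypotheses (e_sym : symmetric e) (e_irr : irreflexive e) (e_bip : bipartite e).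

Let e_tri := bipartite_triangle_free e_bip.

Lemma extremal_complete_bipartite j : 1 < j -> 11 * j + 7 <= #|T| ->
  ~ has_P3_packing e setT j.+1 -> edge_pairs e setT setT = 2 * j * (#|T| - j) ->
  exists2 X : {set T}, #|X| = j & e =2 cross X.
Proof.
case: j => [//|i] i_gt0 large no_j extremal.
have [v vT no_i] : exists2 v, v \in [set: T] & ~ has_P3_packing e ([set: T] :\ v) i.+1.
  by apply: P3_free_high_deg_vertex; rewrite ?cardsT ?extremal.
have rest : edge_pairs e (setT :\ v) (setT :\ v) <= 2 * i * (#|T| - i.+1).
  have := edge_pairs_P3_free e_sym e_irr e_bip i_gt0 _ no_i.
  by rewrite card_setD1 // cardsT -subnDA add1n; apply; lia.
have high : #|T| - i.+1 <= deg e setT v.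
  by move: extremal; rewrite (edge_pairsD1 e_sym e_irr vT) mulnS mulnDl; lia.
have [X bipX vX] := bipartition_of_vertex e_bip v.
have := deg_bipartition setT bipX vX; have := edge_pairs_bipartition setT bipX.
have := cardsC X; rewrite setTI setTD extremal => card_X.
set a := #|X|; set b := #|~: X| => dense deg_b.
have a_le : a <= i.+1 by lia.
have two_j : i.+1 + i.+1 <= #|T| by lia.
have [ab_le ab_eq] := leqif_mul_subn a_le two_j.
rewrite (_ : #|T| - a = b) in ab_le ab_eq; last by lia.
rewrite -mulnA leq_pmul2l // in dense.
have a_eq : a = i.+1 by apply/eqP; rewrite -ab_eq eqn_leq ab_le.
exists X => // x y; apply/eqP.
have [_] := @edge_pairs_leqif _ e (cross X) setT setT bipX.
rewrite edge_pairs_cross setTI setTD extremal -/a -/b a_eq (_ : b = #|T| - i.+1); last by lia.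
by rewrite -mulnA eqxx => /esym /forall_inP /(_ x (in_setT x)) /forall_inP /(_ y (in_setT y)).
Qed.

Lemma extremal_spider : 18 <= #|T| -> ~ has_P3_packing e setT 2 ->
  edge_pairs e setT setT = 2 * (#|T| - 1) ->
  exists s, s <= (#|T| - 1) %/ 2 /\ graph_iso e (Tns_rel #|T| s).
Proof.
move=> large no_2 extremal.
have [v vT no_1] : exists2 v, v \in [set: T] & ~ has_P3_packing e ([set: T] :\ v) 1.
  by apply: (@P3_free_high_deg_vertex _ _ e_sym e_irr e_bip _ 1); rewrite ?cardsT ?extremal ?muln1.
have match_v := P3_free_matching e_sym e_irr no_1.
have nbr := edge_pairs_star_eq e_sym e_irr e_tri vT match_v.
rewrite cardsT in nbr; move/(_ extremal) in nbr.
pose p u := odflt v [pick y | e u y].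
have nbr_p u : u != v -> ~~ e v u -> e v (p u) /\ forall y, e u y = (y == p u).
  move=> uv evu; have [|y0 y0N adj] := nbr u; first by rewrite !inE uv evu.
  have p_y0 : p u = y0 by rewrite /p; case: pickP => [y|/(_ y0)]; rewrite adj // => /eqP.
  by move: y0N; rewrite p_y0 !inE => evy0; split=> // y; apply: adj.
set U := [set u | (u != v) && ~~ e v u].
have adj_U : {in U, forall u y, e u y = (y == p u)}.
  by move=> u; rewrite inE => /andP [uv evu]; case: (nbr_p u uv evu).
have p_N : {in U, forall u, p u \in [set y | e v y]}.
  by move=> u; rewrite !inE => /andP [uv evu]; case: (nbr_p u uv evu).
have p_inj : {in U &, injective p}.
  move=> u u'; rewrite !inE => /andP [uv evu] /andP [u'v evu'] pu_pu'.
  have [evp _] := nbr_p u uv evu; have adj := adj_U u; have adj' := adj_U u'.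
  apply: (induces_matching_nbr match_v (x := p u)); rewrite ?inE ?andbT ?uv ?u'v //.
  - by apply: contraTneq evp => ->; rewrite e_irr.
  - by rewrite e_sym adj ?inE ?uv.
  - by rewrite pu_pu' e_sym adj' ?inE ?u'v.
have indep_N : {in [set y | e v y] &, forall x y, ~~ e x y}.
  by move=> x y; rewrite !inE => evx evy; apply: e_tri evy; rewrite e_sym.
exists #|U|; split; first exact: spider_size_le p_N p_inj.
exact: spider_iso_Tns e_sym e_irr adj_U p_N p_inj indep_N.
Qed.

End Extremal.

Theorem mainTheorem2 (k n : nat) (T : finType) (e : rel T) :
  2 <= k ->
  simple_graph e ->
  bipartite e ->
  #|T| = n ->
  11 * k - 4 <= n ->
  ~ contains_kP3 e k ->
  num_edges e <= (k - 1) * (n - k + 1) /\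
  (k = 2 ->
     (num_edges e = (k - 1) * (n - k + 1) <->
      exists s, s <= (n - 1) %/ 2 /\ graph_iso e (Tns_rel n s))) /\
  (3 <= k ->
     (num_edges e = (k - 1) * (n - k + 1) <->
      graph_iso e (Kab_rel (k - 1) (n - k + 1)))).
Proof.
case: k => [//|j] j_gt0 [e_sym e_irr] e_bip <- large no_kP3.
have no_k : ~ has_P3_packing e setT j.+1.
  by case=> s pack_s size_s; apply: no_kP3; rewrite -size_s; apply: P3_packing_contains.
have [A bipA] := e_bip; have edges := num_edges_double e_sym bipA.
rewrite subn1 /= (_ : #|T| - j.+1 + 1 = #|T| - j); last by lia.
have extremal : num_edges e = j * (#|T| - j) <-> edge_pairs e setT setT = 2 * j * (#|T| - j).
  by rewrite -edges -mulnA; split=> [->|/eqP] //; rewrite eqn_pmul2l // => /eqP.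
split; last split.
- have := edge_pairs_P3_free e_sym e_irr e_bip j_gt0 _ no_k.
  by rewrite -edges cardsT -mulnA leq_pmul2l //; apply; lia.
- case=> j1; subst j; rewrite extremal muln1; split=> [|[s [_ iso]]].
    by apply: extremal_spider => //; lia.
  by rewrite (edge_pairs_iso iso) edge_pairs_Tns //; apply: leq_trans large.
- move=> j_gt1; rewrite extremal; split=> [dense|iso].
    have large' : 11 * j + 7 <= #|T| by lia.
    have [X card_X eX] := extremal_complete_bipartite e_sym e_irr e_bip j_gt1 large' no_k dense.
    have /card_gt0P [x0 _] : 0 < #|T| by lia.
    have card_CX : #|~: X| = #|T| - j by rewrite -card_X -(cardsC X) addKn.
    by rewrite -card_CX -card_X; apply: cross_iso_Kab x0 _ eX.
  by rewrite (edge_pairs_iso iso) edge_pairs_Kab mulnA.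
Qed.
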